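(* Let $H\in\mathbb{C}^{n\times n}$ be PT-symmetric, i.e., suppose there exists a matrix $P\in\mathbb{C}^{n\times n}$ with $P^{2}=I$ such that $P\bar H - HP = 0$. Then $H$ is pseudo-Hermitian. No diagonalizability assumption on $H$ is required.
   Context: For a matrix $M$, $\bar M$ denotes the entrywise complex conjugate and $M^{\dagger}$ its conjugate transpose; $I$ is the $n\times n$ identity. A matrix $H\in\mathbb{C}^{n\times n}$ is called PT-symmetric if it commutes with $PT$, where $P$ is a linear operator (matrix) with $P^2=I$ and $T$ is complex conjugation; in matrix form this is $P\bar H - HP = 0$. A matrix $H$ is called pseudo-Hermitian if there exists a non-singular Hermitian matrix $G\in\mathbb{C}^{n\times n}$ such that $H^{\dagger}G - GH = 0$. *)

(* Complex numbers are modelled by an arbitrary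
   numClosedFieldType C (algebraically closed field with conjugation),
   e.g. algC. *)
From HB Require Import structures.
From mathcomp Require Import all_boot all_order all_algebra.
Set Implicit Arguments. Unset Strict Implicit. Unset Printing Implicit Defensive.
Import Order.TTheory GRing.Theory Num.Theory.
Local Open Scope ring_scope.

Definition conjm (C : numClosedFieldType) (m n : nat) (M : 'M[C]_(m, n)) : 'M[C]_(m, n) :=
  map_mx Num.conj M.

Definition adjm (C : numClosedFieldType) (m n : nat) (M : 'M[C]_(m, n)) : 'M[C]_(n, m) :=
  (conjm M)^T.

Definition hermitianm (C : numClosedFieldType) (n : nat) (G : 'M[C]_n) : Prop :=
  adjm G = G.

Definition PT_symmetric (C : numClosedFieldType) (n : nat) (H : 'M[C]_n) : Prop :=
  exists P : 'M[C]_n, P *m P = 1%:M /\ P *m conjm H - H *m P = 0.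

Definition pseudo_hermitian (C : numClosedFieldType) (n : nat) (H : 'M[C]_n) : Prop :=
  exists G : 'M[C]_n,
    [/\ G \in unitmx, hermitianm G & adjm H *m G - G *m H = 0].

From HB Require Import structures.
From mathcomp Require Import all_boot all_order all_algebra all_fingroup zify ring.
Import GRing.Theory Num.Theory.
Local Open Scope ring_scope.
Set Implicit Arguments. Unset Strict Implicit. Unset Printing Implicit Defensive.

(* If P conj(H) = H P with P^2 = 1, then H is similar to conj(H).  Over an
   algebraically closed field every matrix is similar to its transpose, so
   conj(H) is similar to conj(H)^T = H^dagger; composing gives an invertible T
   with H^dagger T = T H, with no diagonalizability assumption.  Then T^dagger
   intertwines too, and so does every member of the pencil
   (T + T^dagger) + t i (T - T^dagger); it is Hermitian for real t, and its
   determinant is a polynomial in t that is nonzero at t = -i (where the pencil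
   is 2 T), so some natural t gives an invertible Hermitian metric G. *)

Section TransposeSimilarity.

Variable F : fieldType.

Definition transpose_similar n (A : 'M[F]_n) : Prop :=
  exists2 S : 'M_n, S \in unitmx & S *m A = A^T *m S.

(* Transpose-similarity is invariant under similarity: if the square,
   invertible W intertwines A with B, then S := W^T X W works for A. *)
Lemma transpose_similar_intertwine m n (W : 'M[F]_(m, n)) (A : 'M_n) (B : 'M_m) :
  row_free W -> m = n -> W *m A = B *m W -> transpose_similar B ->
  transpose_similar A.
Proof.
move=> Wfree mn WA [X Xu XB]; exists (W^T *m X *m W).
  have rX : \rank X = m by move: Xu; rewrite -row_free_unit => /eqP.
  rewrite -row_free_unit /row_free mxrankMfree // -mxrank_tr trmx_mul trmxK.
  by rewrite mxrankMfree // mxrank_tr rX mn.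
rewrite -!mulmxA WA !mulmxA -(mulmxA W^T X B) XB mulmxA -trmx_mul -WA.
by rewrite trmx_mul.
Qed.

Lemma transpose_similar_shift n (A : 'M[F]_n) (l : F) :
  transpose_similar (A - l%:M) -> transpose_similar A.
Proof.
move=> [S Su SA]; exists S => //.
have -> : S *m A = S *m (A - l%:M) + l *: S by rewrite mulmxBr mul_mx_scalar subrK.
by rewrite SA raddfB /= tr_scalar_mx mulmxBl mul_scalar_mx subrK.
Qed.

(* If the space splits into two complementary A-stable subspaces, with
   row-free bases W1 and W2, on which A is transpose-similar, then so is A:
   glue the two similarities block-diagonally. *)
Lemma transpose_similar_split n k1 k2 (A : 'M[F]_n)
    (W1 : 'M_(k1, n)) (W2 : 'M_(k2, n)) :
  row_free W1 -> row_free W2 -> (W1 :&: W2 = 0)%MS -> (k1 + k2 = n)%N ->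
  stablemx W1 A -> stablemx W2 A ->
  transpose_similar (conjmx W1 A) -> transpose_similar (conjmx W2 A) ->
  transpose_similar A.
Proof.
move=> W1free W2free W12 k12 sW1 sW2 [S1 S1u E1] [S2 S2u E2].
pose B := block_mx (conjmx W1 A) 0 0 (conjmx W2 A).
apply: (@transpose_similar_intertwine _ _ (col_mx W1 W2) A B) => //.
- rewrite /row_free -addsmxE mxrank_disjoint_sum //.
  by move: W1free W2free; rewrite /row_free => /eqP -> /eqP ->.
- by rewrite mul_col_mx mul_block_col !mul0mx addr0 add0r /conjmx !mulmxKpV.
exists (block_mx S1 0 0 S2).
  by rewrite unitmxE det_ublock unitrM -!unitmxE S1u S2u.
rewrite tr_block_mx !trmx0 !mulmx_block !mulmx0 !mul0mx !addr0 !add0r.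
by rewrite E1 E2.
Qed.

Lemma transpose_similar_inv n (B X : 'M[F]_n) :
  X \in unitmx -> B *m X = X *m B^T -> transpose_similar B.
Proof.
move=> Xu BX; exists (invmx X); first by rewrite unitmx_inv.
apply: (canRL (mulmxK Xu)).
by rewrite -mulmxA BX mulmxA mulVmx ?mul1mx.
Qed.

Lemma trmxX n (N : 'M[F]_n) k : (N ^+ k)^T = N^T ^+ k.
Proof.
elim: k => [|k IH]; first by rewrite !expr0 trmx1.
by rewrite exprS exprSr -!mulmxE trmx_mul IH.
Qed.

Lemma nonzero_bilinear_one m n (M : 'M[F]_(m, n)) :
  M != 0 -> exists (v : 'rV_m) (u : 'rV_n), (v *m M *m u^T) 0 0 = 1.
Proof.
case/matrix0Pn=> i [j Mij]; exists (delta_mx 0 i), ((M i j)^-1 *: delta_mx 0 j).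
by rewrite -rowE linearZ /= trmx_delta -scalemxAr -colE !mxE mulVf.
Qed.

Definition krylovmx n m (v : 'rV[F]_n) (N : 'M[F]_n) : 'M[F]_(m, n) :=
  \matrix_(i < m) (v *m N ^+ i).

Definition shiftmx m : 'M[F]_m := \matrix_(i < m, j < m) (i.+1 == j)%:R.

Lemma krylovmx_shift n m (v : 'rV[F]_n) (N : 'M[F]_n) :
  v *m N ^+ m = 0 -> krylovmx m v N *m N = shiftmx m *m krylovmx m v N.
Proof.
move=> vNm; apply/row_matrixP => i; rewrite !row_mul rowK -mulmxA mulmxE -exprSr.
have [lt_im | le_mi] := ltnP i.+1 m.
  have -> : row i (shiftmx m) = delta_mx 0 (Ordinal lt_im).
    by apply/rowP => k; rewrite !mxE eq_sym.
  by rewrite -rowE rowK.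
have im : i.+1 = m by apply/eqP; rewrite eqn_leq le_mi ltn_ord.
have -> : row i (shiftmx m) = 0.
  by apply/rowP => k; rewrite !mxE im eqn_leq leqNgt ltn_ord.
by rewrite mul0mx im.
Qed.

Lemma krylov_pairingE n m (v u : 'rV[F]_n) (N : 'M[F]_n) i j :
  (krylovmx m v N *m (krylovmx m u N^T)^T) i j = (v *m N ^+ (i + j) *m u^T) 0 0.
Proof.
have -> : forall X Y : 'M[F]_(m, n), (X *m Y^T) i j = (row i X *m (row j Y)^T) 0 0.
  by move=> X Y; rewrite !mxE; apply: eq_bigr => k _; rewrite !mxE.
by rewrite !rowK trmx_mul trmxX trmxK mulmxA exprD -mulmxE mulmxA.
Qed.

(* If N^m = 0 and v N^(m-1) u^T = 1, the Hankel pairing of the Krylov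
   matrices is anti-triangular with ones on the anti-diagonal: reversing
   its columns gives a unitriangular matrix, so it is invertible. *)
Lemma krylov_pairing_unit n m (v u : 'rV[F]_n) (N : 'M[F]_n) :
  N ^+ m = 0 -> (v *m N ^+ m.-1 *m u^T) 0 0 = 1 ->
  krylovmx m v N *m (krylovmx m u N^T)^T \in unitmx.
Proof.
move=> Nm vu1; set Hk := _ *m _.
have HkE i j : Hk i j = (v *m N ^+ (i + j) *m u^T) 0 0 by apply: krylov_pairingE.
clearbody Hk.
pose s : {perm 'I_m} := perm (@rev_ord_inj m).
have trig : is_trig_mx (col_perm s Hk)^T.
  apply/is_trig_mxP => i j lt_ij; rewrite !mxE HkE permE /=.
  have -> : (j + (m - i.+1) = m + (j - i.+1))%N.
    by move: (ltn_ord i) (ltn_ord j) lt_ij; lia.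
  by rewrite exprD Nm mul0r mulmx0 mul0mx mxE.
have : \det (col_perm s Hk)^T = 1.
  rewrite det_trig //; apply: big1 => i _; rewrite !mxE HkE permE /=.
  by have -> : (i + (m - i.+1) = m.-1)%N by have := ltn_ord i; lia.
rewrite det_tr col_permE det_mulmx unitmxE => det1.
by apply/unitrPr; exists (\det (perm_mx s^-1)).
Qed.

Lemma nilpotency_index n (N : 'M[F]_n.+1) e :
  N ^+ e = 0 -> exists m, [/\ (0 < m)%N, N ^+ m = 0 & N ^+ m.-1 != 0].
Proof.
elim: e => [|e IH].
  by rewrite expr0 => /matrixP /(_ 0 0); rewrite !mxE eqxx => /eqP; rewrite oner_eq0.
move=> Ne; have [Ne0|Nne] := eqVneq (N ^+ e) 0; first exact: IH.
by exists e.+1.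
Qed.

(* Nilpotent case: with N^m = 0 != N^(m-1), the Krylov space W of a vector v
   with v N^(m-1) != 0 is N-stable, N acts on it as the shift (which is
   transpose-similar through the inverse Hankel pairing), and the kernel of
   the dual Krylov matrix Z is an N-stable complement of dimension n - m < n. *)
Lemma nilpotent_transpose_similar n m (N : 'M[F]_n) :
  (forall k, (k < n)%N -> forall B : 'M[F]_k, transpose_similar B) ->
  (0 < m)%N -> N ^+ m = 0 -> N ^+ m.-1 != 0 -> transpose_similar N.
Proof.
move=> IH m_gt0 Nm Nm1.
have [v [u vu1]] := nonzero_bilinear_one Nm1.
set W := krylovmx m v N; set Z := (krylovmx m u N^T)^T.
have Hk_unit : W *m Z \in unitmx by apply: krylov_pairing_unit.
have WN : W *m N = shiftmx m *m W by apply: krylovmx_shift; rewrite Nm mulmx0.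
have NZ : N *m Z = Z *m (shiftmx m)^T.
  have KN : krylovmx m u N^T *m N^T = shiftmx m *m krylovmx m u N^T.
    by apply: krylovmx_shift; rewrite -trmxX Nm trmx0 mulmx0.
  by rewrite /Z -[N in N *m _]trmxK -trmx_mul KN trmx_mul.
have rHk : \rank (W *m Z) = m by move: Hk_unit; rewrite -row_free_unit => /eqP.
have rW : \rank W = m.
  by apply/eqP; rewrite eqn_leq rank_leq_row -{1}rHk mxrankM_maxl.
have rZ : \rank Z = m.
  by apply/eqP; rewrite eqn_leq rank_leq_col -{1}rHk mxrankM_maxr.
have le_mn : (m <= n)%N by rewrite -rW rank_leq_col.
have rK : \rank (kermx Z) = (n - m)%N by rewrite mxrank_ker rZ.
apply: (@transpose_similar_split _ _ _ N W (row_base (kermx Z))).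
- by rewrite /row_free rW.
- exact: row_base_free.
- apply/eqP/rowV0P => y; rewrite sub_capmx eq_row_base.
  case/andP=> /submxP[b ->] /sub_kermxP; rewrite -mulmxA => bHk.
  by rewrite -(mulmxK Hk_unit b) bHk !mul0mx.
- by rewrite rK; lia.
- by rewrite WN submxMl.
- rewrite stablemx_row_base; apply/sub_kermxP.
  by rewrite -mulmxA NZ mulmxA mulmx_ker mul0mx.
- rewrite /conjmx WN -mulmxA mulmxVp ?mulmx1; last by rewrite /row_free rW.
  apply: (transpose_similar_inv Hk_unit).
  by rewrite mulmxA -WN -mulmxA NZ mulmxA.
- by apply: IH; rewrite rK; lia.
Qed.

Lemma kermxpoly_full n (A : 'M[F]_n.+1) p :
  \rank (kermxpoly A p) = n.+1 -> horner_mx A p = 0.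
Proof. by rewrite /kermxpoly mxrank_ker => rk; apply/eqP; rewrite -mxrank_eq0; lia. Qed.

End TransposeSimilarity.

(* By strong induction on the size: pick a root l of the minimal
   polynomial p_A = (X - l)^e q with q(l) != 0; the kernels of (A - l)^e and
   q(A) are complementary A-stable subspaces.  If both are proper, conclude by
   induction; otherwise A - l is nilpotent. *)
Theorem closed_transpose_similar (F : closedFieldType) n (A : 'M[F]_n) :
  transpose_similar A.
Proof.
elim/ltn_ind: n A => -[|n] IH A.
  by exists 1%:M; [exact: unitmx1 | apply/matrixP => -[]].
have [l min_l] : exists l, root (mxminpoly A) l.
  by apply/closed_rootP; rewrite size_mxminpoly eqSS -lt0n mxminpoly_nonconstant.
have [e [q]] := multiplicity_XsubC (mxminpoly A) l.
rewrite monic_neq0 ?mxminpoly_monic //= => q_l minAE.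
set U1 := kermxpoly A (('X - l%:P) ^+ e); set U2 := kermxpoly A q.
have cop : coprimep (('X - l%:P) ^+ e) q.
  by apply: coprimep_expl; rewrite coprimep_sym coprimep_XsubC.
have U12 : (U1 :&: U2 = 0)%MS by apply: mxdirect_kermxpoly.
have rU12 : (\rank U1 + \rank U2 = n.+1)%N.
  rewrite -mxrank_disjoint_sum // -(kermxpolyM A cop) mulrC -minAE.
  by rewrite (kermxpoly_min (dvdpp _)) mxrank1.
have [rU1|rU1] := eqVneq (\rank U1) 0%N.
  have /mxminpoly_min/root_dvdp/(_ min_l) : horner_mx A q = 0.
    by apply: kermxpoly_full; move: rU12; rewrite rU1.
  by rewrite (negPf q_l).
have [rU2|rU2] := eqVneq (\rank U2) 0%N.
  have : horner_mx A (('X - l%:P) ^+ e) = 0.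
    by apply: kermxpoly_full; move: rU12; rewrite rU2 addn0.
  rewrite rmorphXn /= rmorphB /= horner_mx_X horner_mx_C => /nilpotency_index.
  case=> m [m_gt0 Nm Nm1]; apply: (transpose_similar_shift (l := l)).
  by apply: (nilpotent_transpose_similar _ m_gt0 Nm Nm1) => k lt_kn; apply: IH.
apply: (@transpose_similar_split _ _ _ _ A (row_base U1) (row_base U2)).
- exact: row_base_free.
- exact: row_base_free.
- apply/eqP/rowV0P => y; rewrite sub_capmx !eq_row_base -sub_capmx U12 submx0.
  exact/eqP.
- exact: rU12.
- by rewrite stablemx_row_base comm_mx_stable_kermxpoly.
- by rewrite stablemx_row_base comm_mx_stable_kermxpoly.
- by apply: IH; move: rU2 rU12; lia.
- by apply: IH; move: rU1 rU12; lia.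
Qed.

Lemma det_affine_pencil (R : comNzRingType) n (A B : 'M[R]_n) :
  exists d : {poly R}, forall t, \det (A + t *: B) = d.[t].
Proof.
exists (\det (map_mx polyC A + 'X *: map_mx polyC B)) => t.
rewrite -horner_evalE -det_map_mx; congr (\det _).
by apply/matrixP => i j; rewrite !mxE /= horner_evalE !hornerE.
Qed.

(* In characteristic zero a nonzero polynomial does not vanish at some
   natural number, since it has fewer roots than its size. *)
Lemma nat_nonroot (R : numDomainType) (p : {poly R}) :
  p != 0 -> exists k : nat, ~~ root p k%:R.
Proof.
move=> p_neq0; pose ks := [seq k%:R | k <- iota 0 (size p)] : seq R.
have ks_uniq : uniq ks.
  by rewrite map_inj_uniq ?iota_uniq // => a b /eqP; rewrite eqr_nat => /eqP.
have : ~~ all (root p) ks.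
  apply/negP => /(max_poly_roots p_neq0)/(_ ks_uniq).
  by rewrite size_map size_iota ltnn.
by case/allPn => _ /mapP[k _ ->]; exists k.
Qed.

Section PseudoHermitian.

Variable C : numClosedFieldType.

Lemma adjmE m n (X : 'M[C]_(m, n)) i j : adjm X i j = (X j i)^*.
Proof. by rewrite !mxE. Qed.

Lemma adjmM m n p (X : 'M[C]_(m, n)) (Y : 'M[C]_(n, p)) :
  adjm (X *m Y) = adjm Y *m adjm X.
Proof.
apply/matrixP => i j; rewrite adjmE !mxE rmorph_sum; apply: eq_bigr => k _.
by rewrite !adjmE rmorphM mulrC.
Qed.

Lemma adjmK m n (X : 'M[C]_(m, n)) : adjm (adjm X) = X.
Proof. by apply/matrixP => i j; rewrite !adjmE conjCK. Qed.

Lemma adjm_intertwine n (H T : 'M[C]_n) :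
  adjm H *m T = T *m H -> adjm H *m adjm T = adjm T *m H.
Proof. by move=> HT; rewrite -[H in RHS]adjmK -!adjmM HT. Qed.

Definition hermitian_pencil n (T : 'M[C]_n) (t : C) : 'M[C]_n :=
  (T + adjm T) + t *: ('i *: (T - adjm T)).

Lemma hermitian_pencil_herm n (T : 'M[C]_n) t :
  t^* = t -> hermitianm (hermitian_pencil T t).
Proof.
move=> t_real; apply/matrixP => i j; rewrite /hermitian_pencil adjmE !mxE.
rewrite !(rmorphD, rmorphN, rmorphM) /= conjCi t_real !conjCK.
by ring.
Qed.

Lemma hermitian_pencil_minus_i n (T : 'M[C]_n) :
  hermitian_pencil T (- 'i) = 2%:R *: T.
Proof.
rewrite /hermitian_pencil scalerA mulNr mulCii opprK scale1r.
by rewrite addrACA subrr addr0 scaler_nat mulr2n.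
Qed.

(* From an invertible T with H^dagger T = T H, some member of the pencil
   spanned by T and T^dagger at a real (indeed natural) parameter is an
   invertible Hermitian intertwiner: its determinant is a polynomial that is
   nonzero at -i. *)
Lemma pseudo_hermitian_of_intertwiner n (H T : 'M[C]_n) :
  T \in unitmx -> adjm H *m T = T *m H -> pseudo_hermitian H.
Proof.
move=> Tu HT; have HTadj := adjm_intertwine HT.
have [d dE] := det_affine_pencil (T + adjm T) ('i *: (T - adjm T)).
have d_neq0 : d != 0.
  apply: contraTneq Tu => d0.
  have : \det (hermitian_pencil T (- 'i)) = 0 by rewrite dE d0 horner0.
  rewrite hermitian_pencil_minus_i detZ => /eqP.
  by rewrite mulf_eq0 expf_eq0 pnatr_eq0 andbF unitmxE unitfE negbK.
have [k dk] := nat_nonroot d_neq0.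
exists (hermitian_pencil T k%:R); split.
- by rewrite unitmxE unitfE dE.
- by apply: hermitian_pencil_herm; rewrite rmorph_nat.
rewrite /hermitian_pencil mulmxDr mulmxDl -!scalemxAr -!scalemxAl.
by rewrite !(mulmxDr, mulmxDl, mulmxN, mulNmx) HT HTadj subrr.
Qed.

End PseudoHermitian.

Unset Implicit Arguments. Set Strict Implicit. Set Printing Implicit Defensive.

(* A PT-symmetric H is similar to its entrywise conjugate (P conj(H) = H P
   with P^2 = 1), which is similar to its transpose H^dagger; composing the
   two similarities gives an invertible intertwiner of H^dagger and H. *)
Theorem theorem3 (C : numClosedFieldType) (n : nat) (H : 'M[C]_n) :
  PT_symmetric H -> pseudo_hermitian H.
Proof.
move=> [P [PP PH]].
have [S Su SH] := closed_transpose_similar (conjm H).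
have HP : P *m conjm H = H *m P by apply/eqP; rewrite -subr_eq0 PH.
have conjHP : conjm H *m P = P *m H.
  rewrite -[conjm H]mul1mx -PP -(mulmxA P P) HP.
  by rewrite -!mulmxA PP mulmx1.
have [Pu _] := mulmx1_unit PP.
apply: (@pseudo_hermitian_of_intertwiner C n H (S *m P)).
  by rewrite unitmx_mul Su.
by rewrite mulmxA /adjm -SH -mulmxA conjHP mulmxA.
Qed.
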